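(* Let $0<x_1<x_2<x_3\le 1$. Then there is a unique $x'\in(x_1,x_3)$ with $$\frac{x'-x_1}{x'}+\ln\frac{x_3}{x'}=\frac{x_2-x_1}{x_2}+\frac{x_3-x_2}{x_3},$$ and this $x'$ satisfies $$T_h(x_1,x')+\mathcal H(x',x_3)\le T_h(x_1,x_2)+T_h(x_2,x_3).$$
   Context: For $a,b>0$ define $$T_h(a,b):=\tfrac12\Bigl(\tfrac1a-\tfrac1b+b-a\Bigr)\Bigl(a+\tfrac1b\Bigr),\qquad \mathcal H(a,b):=\ln\frac ba+\frac14\,(b^2-a^2)-\frac14\,(b^{-2}-a^{-2}),$$ with $\ln$ the natural logarithm. (In the paper this says that two consecutive ''steps'' between hyperbola points with abscissae $x_1<x_2<x_3\le1$ can be replaced by one step followed by one slide with the same area contribution and no larger crown.) *)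

From Stdlib Require Import Reals.
Open Scope R_scope.

Definition Th (a b : R) : R :=
  / 2 * (/ a - / b + b - a) * (a + / b).

Definition Hc (a b : R) : R :=
  ln (b / a) + / 4 * (b ^ 2 - a ^ 2) - / 4 * (/ (b ^ 2) - / (a ^ 2)).

(* Write  F(u) = (u - a)/u + ln(c/u)  for the area covered by a step from a
   to u followed by a slide from u to c, and  S = (b - a)/b + (c - b)/c  for
   the area covered by the two steps a -> b -> c  (0 < a < b < c <= 1).
   Everything rests on the elementary bound  (b - a)/b < ln(b/a)  for
   0 < a < b.  It shows that F is strictly decreasing on [a, +oo) and that
   F(c) < S < F(b); by the intermediate value theorem the equation F(u) = S
   has a root in (b, c), and it is unique in (a, c) by monotonicity.

   For the crown inequality we introduce the potential
     Psi(u) = 2 M F(u) - (2 (a u + 1/(a u)) - (u^2 + 1/u^2)),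
   with M = b c + 1/(a b).  At the root z the difference between the two
   crowns is exactly (Psi(c) - Psi(z))/4 (an algebraic identity), and
   Psi' = 2 (u - a)/u^2 (u^2 + 1/(a u) - M) is nonpositive on [b, c] because
   c <= 1.  Since z lies in [b, c], Psi(c) <= Psi(z), which is the claim. *)
From Stdlib Require Import Reals Lra.
From Coquelicot Require Import Coquelicot.
Open Scope R_scope.

Definition area_step_slide (a c u : R) : R := (u - a) / u + ln (c / u).

Definition area_two_steps (a b c : R) : R := (b - a) / b + (c - b) / c.

Lemma ln_ratio_gt (a b : R) : 0 < a -> a < b -> (b - a) / b < ln (b / a).
Proof.
  intros Ha Hab.
  assert (Hneg : ln (a / b) < 0).
  { rewrite <- ln_1. apply ln_increasing.
    - apply Rdiv_lt_0_compat; lra.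
    - apply Rmult_lt_reg_r with b; [lra|]. field_simplify; lra. }
  assert (Hexp := exp_ineq1 (ln (a / b)) ltac:(lra)).
  rewrite exp_ln in Hexp by (apply Rdiv_lt_0_compat; lra).
  rewrite ln_div in Hneg, Hexp by lra. rewrite ln_div by lra.
  replace ((b - a) / b) with (1 - a / b) by (field; lra). lra.
Qed.

Lemma area_step_slide_decreasing (a c y z : R) :
  0 < a -> 0 < c -> a <= y -> y < z ->
  area_step_slide a c z < area_step_slide a c y.
Proof.
  intros Ha Hc Hy Hz. unfold area_step_slide.
  assert (Hln := ln_ratio_gt y z ltac:(lra) Hz).
  rewrite !ln_div in * by lra.
  assert (Hsplit : (y - a) / y - (z - a) / z + (z - y) / z
                   = (z - y) * (y - a) / (y * z)) by (field; lra).
  assert (0 <= (z - y) * (y - a) / (y * z)).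
  { apply Rle_mult_inv_pos; [apply Rmult_le_pos|apply Rmult_lt_0_compat]; lra. }
  lra.
Qed.

Lemma area_step_slide_injective (a c y z : R) :
  0 < a -> 0 < c -> a <= y -> a <= z ->
  area_step_slide a c y = area_step_slide a c z -> y = z.
Proof.
  intros Ha Hc Hy Hz Heq.
  destruct (Rtotal_order y z) as [Hlt|[Hyz|Hgt]]; [|exact Hyz|].
  - assert (H := area_step_slide_decreasing a c y z Ha Hc Hy Hlt). lra.
  - assert (H := area_step_slide_decreasing a c z y Ha Hc Hz Hgt). lra.
Qed.

Lemma continuity_pt_of_derive (f : R -> R) (x l : R) :
  is_derive f x l -> continuity_pt f x.
Proof.
  intros Hd. apply is_derive_Reals in Hd.
  exact (derivable_continuous_pt f x (exist _ l Hd)).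
Qed.

Lemma area_step_slide_root (a b c : R) :
  0 < a -> a < b -> b < c ->
  exists z, b < z < c /\ area_step_slide a c z = area_two_steps a b c.
Proof.
  intros Ha Hab Hbc.
  assert (Hat_b : area_two_steps a b c < area_step_slide a c b).
  { unfold area_two_steps, area_step_slide.
    assert (H := ln_ratio_gt b c ltac:(lra) Hbc). lra. }
  assert (Hat_c : area_step_slide a c c < area_two_steps a b c).
  { unfold area_two_steps, area_step_slide.
    rewrite Rdiv_diag, ln_1 by lra.
    assert (Hgap : (b - a) / b + (c - b) / c - (c - a) / c
                   = (b - a) * (c - b) / (b * c)) by (field; lra).
    assert (0 < (b - a) * (c - b) / (b * c)).
    { apply Rdiv_lt_0_compat; apply Rmult_lt_0_compat; lra. }
    lra. }
  destruct (Ranalysis5.IVT_interv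
              (fun u => area_two_steps a b c - area_step_slide a c u) b c)
    as [z [Hz Hroot]]; [|lra|lra|lra|].
  - intros u Hu. apply (continuity_pt_of_derive _ _ ((u - a) / u ^ 2)).
    unfold area_two_steps, area_step_slide. auto_derive.
    + repeat split; try lra. apply Rdiv_lt_0_compat; lra.
    + field. lra.
  - exists z. split; [|lra].
    split; apply Rnot_le_lt; intro Hle;
      [assert (z = b) by lra | assert (z = c) by lra]; subst z; lra.
Qed.

Definition crown_potential (a c M u : R) : R :=
  2 * M * area_step_slide a c u - (2 * (a * u + / (a * u)) - (u ^ 2 + / u ^ 2)).

Lemma crown_potential_derive (a c M u : R) : 0 < a -> 0 < c -> 0 < u ->
  is_derive (crown_potential a c M) u
    (2 * (u - a) / u ^ 2 * (u ^ 2 + / (a * u) - M)).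
Proof.
  intros Ha Hc Hu. unfold crown_potential, area_step_slide. auto_derive.
  - repeat split; try apply Rgt_not_eq; try apply Rdiv_lt_0_compat; nra.
  - field. repeat split; lra.
Qed.

(* On [b, c] with c <= 1, the bracket in Psi' is nonpositive for
   M = b c + 1/(a b). *)
Lemma crown_slope_bound (a b c u : R) :
  0 < a -> a < b -> b <= u -> u <= c -> c <= 1 ->
  u ^ 2 + / (a * u) <= b * c + / (a * b).
Proof.
  intros Ha Hab Hbu Huc Hc.
  assert (Hprod : a * b * u * c <= 1).
  { assert (a * b <= 1) by nra. assert (u * c <= 1) by nra.
    assert (0 <= a * b) by nra. assert (0 <= u * c) by nra. nra. }
  assert (Hdiff : b * c + / (a * b) - (u ^ 2 + / (a * u))
                  = (b * c - u ^ 2) + (u - b) / (a * b * u)) by (field; lra).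
  assert (Hsq : b * c - c * u <= b * c - u ^ 2) by nra.
  assert (Hquot : c * (u - b) <= (u - b) / (a * b * u)).
  { assert (Habu : 0 < a * b * u) by (apply Rmult_lt_0_compat; nra).
    apply Rmult_le_reg_r with (a * b * u); [exact Habu|].
    replace ((u - b) / (a * b * u) * (a * b * u)) with (u - b) by (field; lra).
    assert (0 <= u - b) by lra. nra. }
  lra.
Qed.

Lemma nonincreasing_of_derive_nonpos (f df : R -> R) (u v : R) :
  u <= v ->
  (forall x, u <= x <= v -> is_derive f x (df x)) ->
  (forall x, u <= x <= v -> df x <= 0) ->
  f v <= f u.
Proof.
  intros Huv Hd Hneg.
  destruct (MVT_gen f u v df) as [x [Hx Hmvt]].
  - intros x Hx. rewrite Rmin_left, Rmax_right in Hx by lra. apply Hd. lra.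
  - intros x Hx. rewrite Rmin_left, Rmax_right in Hx by lra.
    apply (continuity_pt_of_derive _ _ (df x)), Hd, Hx.
  - rewrite Rmin_left, Rmax_right in Hx by lra.
    assert (Hdx := Hneg x Hx). nra.
Qed.

Lemma crown_potential_nonincreasing (a b c u v : R) :
  0 < a -> a < b -> b <= u -> u <= v -> v <= c -> c <= 1 ->
  crown_potential a c (b * c + / (a * b)) v
  <= crown_potential a c (b * c + / (a * b)) u.
Proof.
  intros Ha Hab Hbu Huv Hvc Hc.
  apply (nonincreasing_of_derive_nonpos _
           (fun x => 2 * (x - a) / x ^ 2 * (x ^ 2 + / (a * x) - (b * c + / (a * b)))));
    [exact Huv| |].
  - intros x Hx. apply crown_potential_derive; lra.
  - intros x Hx.
    assert (Hw : 0 <= 2 * (x - a) / x ^ 2).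
    { apply Rle_mult_inv_pos; [lra|apply pow_lt; lra]. }
    assert (Hbr := crown_slope_bound a b c x Ha Hab ltac:(lra) ltac:(lra) Hc).
    nra.
Qed.

Lemma crown_difference_identity (a b c z : R) :
  0 < a -> 0 < b -> 0 < c -> 0 < z ->
  area_step_slide a c z = area_two_steps a b c ->
  Th a z + Hc z c - (Th a b + Th b c)
  = / 4 * (crown_potential a c (b * c + / (a * b)) c
           - crown_potential a c (b * c + / (a * b)) z).
Proof.
  intros Ha Hb Hcpos Hz Harea.
  unfold crown_potential. rewrite Harea.
  unfold area_step_slide in *. unfold Hc, area_two_steps in *.
  rewrite Rdiv_diag, ln_1 by lra.
  replace (ln (c / z)) with ((b - a) / b + (c - b) / c - (z - a) / z) by lra.
  unfold Th. field. repeat split; lra.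
Qed.

Theorem mainTheorem3 (x1 x2 x3 : R) :
  0 < x1 -> x1 < x2 -> x2 < x3 -> x3 <= 1 ->
  exists x' : R,
    (x1 < x' < x3 /\
     (x' - x1) / x' + ln (x3 / x') = (x2 - x1) / x2 + (x3 - x2) / x3) /\
    (forall y : R, x1 < y < x3 ->
       (y - x1) / y + ln (x3 / y) = (x2 - x1) / x2 + (x3 - x2) / x3 ->
       y = x') /\
    Th x1 x' + Hc x' x3 <= Th x1 x2 + Th x2 x3.
Proof.
  intros H1 H12 H23 H3.
  destruct (area_step_slide_root x1 x2 x3 H1 H12 H23) as [z [Hz Harea]].
  exists z. split; [|split].
  - split; [lra|exact Harea].
  - intros y Hy Hyarea.
    apply (area_step_slide_injective x1 x3); try lra.
    change (area_step_slide x1 x3 y = area_two_steps x1 x2 x3) in Hyarea. lra.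
  - assert (Hid := crown_difference_identity x1 x2 x3 z
                     H1 ltac:(lra) ltac:(lra) ltac:(lra) Harea).
    assert (Hmono := crown_potential_nonincreasing x1 x2 x3 z x3
                       H1 H12 ltac:(lra) ltac:(lra) ltac:(lra) H3).
    lra.
Qed.
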